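(* For any fixed $\lambda > 0$ there exists $p_0(\lambda)$ such that for all primes $p \ge p_0(\lambda)$, \[ \alpha_p(\lambda) := \operatorname{Cov}_{\mu^{(p)}_\lambda}\bigl(g_p(x),\, x^2\bigr) > 0, \] where $\mu^{(p)}_\lambda$ is the probability measure on $[-1,1]$ with $\mu^{(p)}_\lambda(dx) \propto \sqrt{1-x^2}\,(1 - 2x/\sqrt{p} + 1/p)^{-\lambda}\,dx$ and $g_p(x) = -\log(1 - 2x/\sqrt{p} + 1/p)$. *)

From Stdlib Require Import Reals ZArith Znumtheory.
From Coquelicot Require Import Coquelicot.
Open Scope R_scope.

Definition qp (p : nat) (x : R) : R := 1 - 2 * x / sqrt (INR p) + / INR p.

Definition gp (p : nat) (x : R) : R := - ln (qp p x).

Definition dens (lam : R) (p : nat) (x : R) : R :=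
  sqrt (1 - x ^ 2) * Rpower (qp p x) (- lam).

Definition Zp (lam : R) (p : nat) : R := RInt (dens lam p) (-1) 1.

Definition Ep (lam : R) (p : nat) (f : R -> R) : R :=
  RInt (fun x => f x * dens lam p x) (-1) 1 / Zp lam p.

Definition Covp (lam : R) (p : nat) (f h : R -> R) : R :=
  Ep lam p (fun x => f x * h x) - Ep lam p f * Ep lam p h.

Definition alpha (p : nat) (lam : R) : R :=
  Covp lam p (gp p) (fun x => x ^ 2).

From Stdlib Require Import Reals ZArith Znumtheory Lra Lia.
From Coquelicot Require Import Coquelicot.
Open Scope R_scope.

(* Condition on |x|.  Since sqrt (1 - x^2) is even, the conditional mean of g_p
   given |x| = s is the exp (lam g_p)-weighted mean G(s) of g_p(s) and g_p(-s).
   G is strictly increasing on [0,1]: g_p(s) - g_p(-s) and g_p(s) + g_p(-s) both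
   increase, the latter strictly because q_p(s) q_p(-s) = (1 + 1/p)^2 - 4 s^2/p.
   With m = E[x^2] and t = sqrt m, Cov(g_p, x^2) = E[(g_p - G(t)) (x^2 - m)], and
   folding the integral onto [0,1] gives a positive weight times
   (s^2 - t^2) (G(s) - G(t)), which is positive for s <> t.  Hence alpha_p(lam) > 0
   for every p >= 2, prime or not. *)

Lemma continuous_Rmult (f g : R -> R) x :
  continuous f x -> continuous g x -> continuous (fun y => f y * g y) x.
Proof. intros; apply (continuous_mult f g); auto. Qed.

Lemma continuous_Rplus (f g : R -> R) x :
  continuous f x -> continuous g x -> continuous (fun y => f y + g y) x.
Proof. intros; apply (continuous_plus f g); auto. Qed.

Lemma continuous_Rminus (f g : R -> R) x :
  continuous f x -> continuous g x -> continuous (fun y => f y - g y) x.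
Proof. intros; apply (continuous_minus f g); auto. Qed.

Lemma continuous_comp_opp (f : R -> R) x :
  continuous f (- x) -> continuous (fun y => f (- y)) x.
Proof.
  intros Hf. apply (continuous_comp Ropp f); [|exact Hf].
  apply (ex_derive_continuous Ropp). auto_derive. auto.
Qed.

Lemma continuous_pow2 x : continuous (fun y => y ^ 2) x.
Proof. apply (ex_derive_continuous (fun y => y ^ 2)). auto_derive. auto. Qed.

Lemma ex_RInt_continuous_le (f : R -> R) a b :
  a <= b -> (forall x, a <= x <= b -> continuous f x) -> ex_RInt f a b.
Proof.
  intros Hab Hf. apply (ex_RInt_continuous (V := R_CompleteNormedModule)).
  intros x Hx. rewrite Rmin_left, Rmax_right in Hx by lra. auto.
Qed.

Lemma RInt_symmetric_fold (f : R -> R) a :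
  0 <= a -> (forall x, - a <= x <= a -> continuous f x) ->
  RInt f (- a) a = RInt (fun x => f x + f (- x)) 0 a.
Proof.
  intros Ha Hf.
  assert (Hneg : ex_RInt f (- a) 0)
    by (apply ex_RInt_continuous_le; [lra | intros; apply Hf; lra]).
  assert (Hpos : ex_RInt f 0 a)
    by (apply ex_RInt_continuous_le; [lra | intros; apply Hf; lra]).
  assert (Hrefl : ex_RInt (fun x => f (- x)) 0 a).
  { apply ex_RInt_continuous_le; [lra |].
    intros; apply continuous_comp_opp, Hf; lra. }
  assert (Hsub : RInt (fun x => f (- x)) 0 a = RInt f (- a) 0).
  { assert (Hopp : is_RInt f (- 0) (- a) (RInt f 0 (- a))).
    { rewrite Ropp_0. exact (RInt_correct f 0 (- a) (ex_RInt_swap _ _ _ Hneg)). }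
    pose proof (is_RInt_unique _ _ _ _ (is_RInt_comp_opp _ _ _ _ Hopp)) as H.
    rewrite (RInt_opp (fun y => f (- y))), <- (opp_RInt_swap f) in H by assumption.
    unfold opp in H; simpl in H. lra. }
  rewrite <- (RInt_Chasles f (- a) 0 a Hneg Hpos).
  transitivity (plus (RInt f 0 a) (RInt (fun x => f (- x)) 0 a)).
  - rewrite Hsub. unfold plus; simpl. ring.
  - symmetry. apply (RInt_plus f (fun x => f (- x))); assumption.
Qed.

Lemma is_RInt_add_scal (f g : R -> R) a b k If Ig :
  is_RInt f a b If -> is_RInt g a b Ig ->
  is_RInt (fun x => f x + k * g x) a b (If + k * Ig).
Proof.
  intros Hf Hg. apply (is_RInt_plus (V := R_NormedModule) f (fun x => scal k (g x))).
  - exact Hf.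
  - exact (is_RInt_scal g a b k Ig Hg).
Qed.

Lemma RInt_centered_product (w f h : R -> R) a b c m :
  ex_RInt w a b -> ex_RInt (fun x => f x * w x) a b ->
  ex_RInt (fun x => h x * w x) a b -> ex_RInt (fun x => f x * h x * w x) a b ->
  RInt (fun x => (f x - c) * (h x - m) * w x) a b =
  RInt (fun x => f x * h x * w x) a b - m * RInt (fun x => f x * w x) a b
  - c * RInt (fun x => h x * w x) a b + c * m * RInt w a b.
Proof.
  intros Hw Hfw Hhw Hfhw. apply is_RInt_unique.
  apply (is_RInt_ext (V := R_NormedModule) (fun x => f x * h x * w x + - m * (f x * w x)
                               + - c * (h x * w x) + c * m * w x)).
  { intros x _. simpl. ring. }
  replace (_ - _ - _ + _) with (RInt (fun x => f x * h x * w x) a b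
    + - m * RInt (fun x => f x * w x) a b + - c * RInt (fun x => h x * w x) a b
    + c * m * RInt w a b) by ring.
  apply is_RInt_add_scal; [apply is_RInt_add_scal; [apply is_RInt_add_scal |] |].
  - exact (RInt_correct _ _ _ Hfhw).
  - exact (RInt_correct _ _ _ Hfw).
  - exact (RInt_correct _ _ _ Hhw).
  - exact (RInt_correct _ _ _ Hw).
Qed.

Lemma RInt_gt_0_off_point (F : R -> R) a t b :
  a < b -> a <= t <= b -> (forall x, a <= x <= b -> continuous F x) ->
  (forall x, a < x < b -> x <> t -> 0 < F x) -> 0 < RInt F a b.
Proof.
  intros Hab Ht HF Hpos.
  destruct (Req_dec t a) as [-> | Hta].
  { apply RInt_gt_0; [exact Hab | | exact HF]. intros x Hx. apply Hpos; lra. }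
  assert (Hl : ex_RInt F a t)
    by (apply ex_RInt_continuous_le; [lra | intros; apply HF; lra]).
  assert (Hr : ex_RInt F t b)
    by (apply ex_RInt_continuous_le; [lra | intros; apply HF; lra]).
  assert (Hl_pos : 0 < RInt F a t).
  { apply RInt_gt_0; [lra | | intros; apply HF; lra]. intros x Hx. apply Hpos; lra. }
  assert (Hr_nonneg : 0 <= RInt F t b).
  { apply RInt_ge_0; [lra | exact Hr |]. intros x Hx. left. apply Hpos; lra. }
  rewrite <- (RInt_Chasles F a t b Hl Hr). unfold plus; simpl. lra.
Qed.

Lemma mul_sub_increasing_pos (u v : R -> R) a b x t :
  (forall y z, a <= y -> y < z -> z <= b -> u y < u z) ->
  (forall y z, a <= y -> y < z -> z <= b -> v y < v z) ->
  a <= x <= b -> a <= t <= b -> x <> t -> 0 < (u x - u t) * (v x - v t).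
Proof.
  intros Hu Hv Hx Ht Hxt.
  destruct (Rlt_or_le x t) as [Hlt | Hle].
  - pose proof (Hu x t ltac:(lra) Hlt ltac:(lra)).
    pose proof (Hv x t ltac:(lra) Hlt ltac:(lra)). nra.
  - assert (Hlt : t < x) by lra.
    pose proof (Hu t x ltac:(lra) Hlt ltac:(lra)).
    pose proof (Hv t x ltac:(lra) Hlt ltac:(lra)). nra.
Qed.

Definition tilted_mean (lam a b : R) : R :=
  (exp (lam * a) * a + exp (lam * b) * b) / (exp (lam * a) + exp (lam * b)).

Lemma tilted_mean_eq lam a b :
  tilted_mean lam a b =
  (a + b) / 2 + (a - b) / 2 * ((exp (lam * (a - b)) - 1) / (exp (lam * (a - b)) + 1)).
Proof.
  unfold tilted_mean.
  replace (lam * (a - b)) with (lam * a + - (lam * b)) by ring.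
  rewrite exp_plus, exp_Ropp.
  pose proof (exp_pos (lam * a)). pose proof (exp_pos (lam * b)).
  field. split; [| lra]. intros Hz.
  assert (exp (lam * a) * / exp (lam * b) + 1 > 0)
    by (pose proof (Rinv_0_lt_compat _ (exp_pos (lam * b))); nra).
  lra.
Qed.

Lemma exp_ratio_le x y : 0 <= x <= y ->
  0 <= (exp x - 1) / (exp x + 1) <= (exp y - 1) / (exp y + 1).
Proof.
  intros Hxy.
  assert (Hx1 : 1 <= exp x) by (pose proof (exp_ineq1_le x); lra).
  assert (Hxy' : exp x <= exp y).
  { destruct (Rle_lt_or_eq_dec x y) as [Hlt | ->]; [lra | | lra].
    left; apply exp_increasing, Hlt. }
  assert (Hdiff : (exp y - 1) / (exp y + 1) - (exp x - 1) / (exp x + 1)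
                  = 2 * (exp y - exp x) / ((exp x + 1) * (exp y + 1))) by (field; lra).
  split.
  - apply Rmult_le_pos; [lra |]. left; apply Rinv_0_lt_compat; lra.
  - enough (0 <= 2 * (exp y - exp x) / ((exp x + 1) * (exp y + 1))) by lra.
    apply Rmult_le_pos; [lra |]. left; apply Rinv_0_lt_compat; nra.
Qed.

(* In the form of [tilted_mean_eq] the mean is [s/2 + (d/2) tanh(lam d/2)] with
   [s = a + b], [d = a - b]: increasing in [s], and in [d >= 0]. *)
Lemma tilted_mean_lt lam a b a' b' :
  0 < lam -> b <= a -> a - b <= a' - b' -> a + b < a' + b' ->
  tilted_mean lam a b < tilted_mean lam a' b'.
Proof.
  intros Hlam Hba Hd Hs. rewrite !tilted_mean_eq.
  destruct (exp_ratio_le (lam * (a - b)) (lam * (a' - b'))) as [Hr0 Hr]; [nra |].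
  nra.
Qed.

Section LogKernel.

Variable p : nat.
Hypothesis Hp : 1 < INR p.

Lemma sqrt_INR_gt_1 : 1 < sqrt (INR p).
Proof. rewrite <- sqrt_1. apply sqrt_lt_1; lra. Qed.

Lemma qp_eq x : qp p x = 1 - 2 * x * / sqrt (INR p) + (/ sqrt (INR p)) ^ 2.
Proof.
  pose proof sqrt_INR_gt_1 as Hs.
  unfold qp. rewrite <- (sqrt_sqrt (INR p)) at 2 by lra. field. lra.
Qed.

Lemma qp_pos x : -1 <= x <= 1 -> 0 < qp p x.
Proof.
  intros Hx. rewrite qp_eq.
  pose proof sqrt_INR_gt_1 as Hs.
  assert (He : 0 < / sqrt (INR p) < 1).
  { split; [apply Rinv_0_lt_compat; lra |].
    rewrite <- Rinv_1. apply Rinv_lt_contravar; lra. }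
  nra.
Qed.

Lemma qp_decreasing x y : x < y -> qp p y < qp p x.
Proof.
  intros Hxy. rewrite !qp_eq.
  pose proof (Rinv_0_lt_compat _ (Rlt_trans _ _ _ Rlt_0_1 sqrt_INR_gt_1)). nra.
Qed.

Lemma qp_mul_opp x : qp p x * qp p (- x) = (1 + / INR p) ^ 2 - 4 * x ^ 2 / INR p.
Proof.
  pose proof sqrt_INR_gt_1 as Hs.
  assert (Hsq : INR p = sqrt (INR p) * sqrt (INR p)) by (rewrite sqrt_sqrt; lra).
  unfold qp. set (s := sqrt (INR p)) in *. rewrite Hsq. field. lra.
Qed.

Lemma gp_le x y : -1 <= x -> x <= y -> y <= 1 -> gp p x <= gp p y.
Proof.
  intros Hx Hxy Hy. unfold gp. apply Ropp_le_contravar, ln_le.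
  - apply qp_pos; lra.
  - destruct Hxy as [Hlt | ->]; [left; apply qp_decreasing, Hlt | lra].
Qed.

Lemma gp_add_opp_lt x y : 0 <= x -> x < y -> y <= 1 ->
  gp p x + gp p (- x) < gp p y + gp p (- y).
Proof.
  intros Hx Hxy Hy. unfold gp.
  assert (Hprod : qp p y * qp p (- y) < qp p x * qp p (- x)).
  { rewrite !qp_mul_opp. unfold Rdiv.
    pose proof (Rinv_0_lt_compat _ (Rlt_trans _ _ _ Rlt_0_1 Hp)).
    assert (x ^ 2 < y ^ 2) by nra. nra. }
  assert (Hln : ln (qp p y * qp p (- y)) < ln (qp p x * qp p (- x))).
  { apply ln_increasing; [| exact Hprod].
    apply Rmult_lt_0_compat; apply qp_pos; lra. }
  rewrite !ln_mult in Hln by (apply qp_pos; lra). lra.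
Qed.

Lemma gp_continuous x : -1 <= x <= 1 -> continuous (gp p) x.
Proof.
  intros Hx. apply (ex_derive_continuous (gp p)).
  pose proof (qp_pos x Hx) as Hq. pose proof sqrt_INR_gt_1 as Hs.
  unfold gp, qp in *. auto_derive. repeat split; lra.
Qed.

End LogKernel.

Section TiltedSemicircle.

Variable lam : R.
Variable p : nat.
Hypothesis Hp : 1 < INR p.

Lemma dens_eq_exp x : dens lam p x = sqrt (1 - x ^ 2) * exp (lam * gp p x).
Proof. unfold dens, Rpower, gp. f_equal. f_equal. ring. Qed.

Lemma dens_pos x : -1 < x < 1 -> 0 < dens lam p x.
Proof.
  intros Hx. rewrite dens_eq_exp.
  apply Rmult_lt_0_compat; [apply sqrt_lt_R0; nra | apply exp_pos].
Qed.

Lemma dens_continuous x : -1 <= x <= 1 -> continuous (dens lam p) x.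
Proof.
  intros Hx. apply (continuous_ext (fun y => sqrt (1 - y ^ 2) * exp (lam * gp p y))).
  { intros y. symmetry. apply dens_eq_exp. }
  apply continuous_Rmult.
  - apply continuous_sqrt_comp, continuous_Rminus; [apply continuous_const | apply continuous_pow2].
  - apply continuous_exp_comp, continuous_Rmult; [apply continuous_const |].
    apply gp_continuous; assumption.
Qed.

Lemma ex_RInt_weighted (f : R -> R) :
  (forall x, -1 <= x <= 1 -> continuous f x) ->
  ex_RInt (fun x => f x * dens lam p x) (-1) 1.
Proof.
  intros Hf. apply ex_RInt_continuous_le; [lra |].
  intros x Hx. apply continuous_Rmult; [apply Hf | apply dens_continuous]; assumption.
Qed.

Lemma Zp_pos : 0 < Zp lam p.
Proof.
  apply RInt_gt_0; [lra | apply dens_pos | apply dens_continuous].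
Qed.

Lemma Ep_bounds (f : R -> R) lo hi :
  (forall x, -1 <= x <= 1 -> continuous f x) ->
  (forall x, -1 < x < 1 -> lo <= f x <= hi) -> lo <= Ep lam p f <= hi.
Proof.
  intros Hf Hbnd.
  assert (Hw : ex_RInt (dens lam p) (-1) 1)
    by (apply ex_RInt_continuous_le; [lra | apply dens_continuous]).
  pose proof Zp_pos as HZ.
  assert (Hconst : forall k, k * Zp lam p = RInt (fun x => k * dens lam p x) (-1) 1)
    by (intros k; symmetry; exact (RInt_scal (V := R_CompleteNormedModule) _ _ _ k Hw)).
  assert (Hint : Ep lam p f * Zp lam p = RInt (fun x => f x * dens lam p x) (-1) 1)
    by (unfold Ep; field; lra).
  assert (Hlo : lo * Zp lam p <= Ep lam p f * Zp lam p).
  { rewrite (Hconst lo), Hint. apply RInt_le; [lra | | apply ex_RInt_weighted, Hf |].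
    - apply ex_RInt_weighted. intros; apply continuous_const.
    - intros x Hx. pose proof (dens_pos x Hx). pose proof (Hbnd x Hx). nra. }
  assert (Hhi : Ep lam p f * Zp lam p <= hi * Zp lam p).
  { rewrite (Hconst hi), Hint. apply RInt_le; [lra | apply ex_RInt_weighted, Hf | |].
    - apply ex_RInt_weighted. intros; apply continuous_const.
    - intros x Hx. pose proof (dens_pos x Hx). pose proof (Hbnd x Hx). nra. }
  split; nra.
Qed.

Lemma Covp_centered (f h : R -> R) c :
  (forall x, -1 <= x <= 1 -> continuous f x) ->
  (forall x, -1 <= x <= 1 -> continuous h x) ->
  Covp lam p f h = Ep lam p (fun x => (f x - c) * (h x - Ep lam p h)).
Proof.
  intros Hf Hh. pose proof Zp_pos as HZ.
  set (m := Ep lam p h).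
  unfold Covp, Ep at 1 2 4. cbv beta.
  rewrite RInt_centered_product.
  - unfold m, Ep, Zp. field. unfold Zp in HZ. lra.
  - apply ex_RInt_continuous_le; [lra | apply dens_continuous].
  - apply ex_RInt_weighted, Hf.
  - apply ex_RInt_weighted, Hh.
  - apply (ex_RInt_weighted (fun x => f x * h x)).
    intros x Hx. apply continuous_Rmult; auto.
Qed.

End TiltedSemicircle.

(* On the fibre [{x, -x}] the density is proportional to [exp (lam * gp p (+-x))]
   (the factor [sqrt (1 - x ^ 2)] is even), so this is [E[gp p | |X| = x]]. *)
Definition gp_cond_mean (lam : R) (p : nat) (x : R) : R :=
  tilted_mean lam (gp p x) (gp p (- x)).

Lemma centered_integrand_fold lam p c m x :
  (gp p x - c) * (x ^ 2 - m) * dens lam p x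
  + (gp p (- x) - c) * ((- x) ^ 2 - m) * dens lam p (- x)
  = sqrt (1 - x ^ 2) * (exp (lam * gp p x) + exp (lam * gp p (- x)))
    * ((x ^ 2 - m) * (gp_cond_mean lam p x - c)).
Proof.
  unfold gp_cond_mean, tilted_mean. rewrite !dens_eq_exp.
  replace ((- x) ^ 2) with (x ^ 2) by ring.
  pose proof (exp_pos (lam * gp p x)). pose proof (exp_pos (lam * gp p (- x))).
  field. lra.
Qed.

Section Positivity.

Variable lam : R.
Variable p : nat.
Hypothesis Hlam : 0 < lam.
Hypothesis Hp : 1 < INR p.

Lemma gp_cond_mean_lt x y : 0 <= x -> x < y -> y <= 1 ->
  gp_cond_mean lam p x < gp_cond_mean lam p y.
Proof.
  intros Hx Hxy Hy. apply tilted_mean_lt; [exact Hlam | apply gp_le; lra | |].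
  - pose proof (gp_le p Hp x y ltac:(lra) ltac:(lra) ltac:(lra)).
    pose proof (gp_le p Hp (- y) (- x) ltac:(lra) ltac:(lra) ltac:(lra)). lra.
  - apply gp_add_opp_lt; assumption.
Qed.

Lemma alpha_pos : 0 < alpha p lam.
Proof.
  set (m := Ep lam p (fun x => x ^ 2)).
  assert (Hm : 0 <= m <= 1).
  { apply Ep_bounds; [exact Hp | intros; apply continuous_pow2 | intros; nra]. }
  set (t := sqrt m).
  assert (Ht : 0 <= t <= 1).
  { split; [apply sqrt_pos |]. unfold t. rewrite <- sqrt_1. apply sqrt_le_1_alt; lra. }
  assert (Ht2 : t ^ 2 = m) by (unfold t; rewrite pow2_sqrt; lra).
  set (c := gp_cond_mean lam p t).
  unfold alpha. rewrite (Covp_centered lam p Hp _ _ c).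
  2: { intros; apply gp_continuous; assumption. }
  2: { intros; apply continuous_pow2. }
  fold m. unfold Ep at 1. cbv beta.
  apply Rdiv_lt_0_compat; [| apply Zp_pos, Hp].
  set (k := fun x => (gp p x - c) * (x ^ 2 - m) * dens lam p x).
  assert (Hk : forall x, -1 <= x <= 1 -> continuous k x).
  { intros x Hx. unfold k. apply continuous_Rmult; [apply continuous_Rmult |].
    - apply continuous_Rminus; [apply gp_continuous | apply continuous_const]; assumption.
    - apply continuous_Rminus; [apply continuous_pow2 | apply continuous_const].
    - apply dens_continuous; assumption. }
  change (-1) with (Ropp 1).
  rewrite RInt_symmetric_fold by (exact Rle_0_1 || exact Hk).
  apply (RInt_gt_0_off_point _ 0 t 1); [lra | exact Ht | |].
  - intros x Hx. apply continuous_Rplus; [| apply continuous_comp_opp]; apply Hk; lra.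
  - intros x Hx Hxt. unfold k. rewrite centered_integrand_fold.
    apply Rmult_lt_0_compat.
    + apply Rmult_lt_0_compat; [apply sqrt_lt_R0; nra |].
      pose proof (exp_pos (lam * gp p x)). pose proof (exp_pos (lam * gp p (- x))). lra.
    + rewrite <- Ht2. unfold c.
      apply (mul_sub_increasing_pos (fun y => y ^ 2) (gp_cond_mean lam p) 0 1);
        [intros; nra | intros; apply gp_cond_mean_lt; lra | lra | exact Ht | exact Hxt].
Qed.

End Positivity.

Theorem theoremA4 (lam : R) (hlam : 0 < lam) :
  exists p0 : nat, forall p : nat,
    prime (Z.of_nat p) -> (p0 <= p)%nat -> 0 < alpha p lam.
Proof.
  exists 2%nat. intros p _ Hp2.
  apply alpha_pos; [exact hlam |].
  apply lt_1_INR. lia.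
Qed.
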